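(* Let $\mathcal B$ be a BMC with $\mathbf c^*_q<\infty$ for all $q\in\mathcal T$, and consider the Q-learning process with learning rates $\lambda_i\in[0,1]$, a fixed selection distribution $(p_q)_{q\in\mathcal T}$, and initial value $Q_0=\kappa\mathbf c^*$ for a scalar $\kappa\ge 1$. Then for all $i\in\mathbb N$, $\mathbf c^*\le T(\mathbb E Q_i)\le \mathbb E Q_{i+1}\le\mathbb E Q_i$.
   Context: A branching Markov chain (BMC) is $\mathcal B=(\mathcal T,p,c)$ with $\mathcal T$ a finite set of types, $p(q)$ for each $q\in\mathcal T$ a probability distribution with finite support over finite lists $\mathcal T^*$ of types (the offspring distribution), and $c:\mathcal T\to\mathbb R_{>0}$ a strictly positive cost. (It is a BMDP with one action per type.) For a list $\alpha$, $|\alpha|$ is its length and $\alpha_i$ its $i$-th element. Its process: a list of entities; repeatedly some entity of type $q$ is replaced by a list $\beta$ drawn from $p(q)$, incurring cost $c(q)$, until the list is empty. $\mathbf c^*_q\in[0,\infty]$ denotes the expected total cost until extinction starting from the single entity $q$; equivalently $\mathbf c^*$ is the least fixed point in $[0,\infty]^{\mathcal T}$ of $F(\mathbf x)_q=c(q)+\sum_\alpha p(q)(\alpha)\sum_{i=1}^{|\alpha|}\mathbf x_{\alpha_i}$. Q-values for a BMC are vectors $Q\in\mathbb R_{\ge0}^{\mathcal T}$. The target operator is $T(Q)(q)=c(q)+\sum_{\alpha\in\mathcal T^*}p(q)(\alpha)\sum_{j=1}^{|\alpha|}Q(\alpha_j)$ (an affine map $T(Q)=BQ+\mathbf c$ with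 $B$ a nonnegative matrix). Q-learning process: given deterministic learning rates $\lambda_i\in[0,1]$, a probability distribution $(p_q)_{q\in\mathcal T}$ and an initial vector $Q_0\ge\mathbf 0$, at each step $i=0,1,2,\dots$ a type $q_i$ is selected with probability $p_{q_i}$ independently of all previous randomness, then a list $\beta^i$ is drawn from $p(q_i)$ independently, and $Q_{i+1}(q_i)=(1-\lambda_i)Q_i(q_i)+\lambda_i\big(c(q_i)+\sum_{j=1}^{|\beta^i|}Q_i(\beta^i_j)\big)$, while $Q_{i+1}(q)=Q_i(q)$ for $q\ne q_i$. $\mathbb E Q_i$ is the componentwise expectation; inequalities between vectors are componentwise. *)

From HB Require Import structures.
From mathcomp Require Import all_boot all_order all_algebra.
From mathcomp Require Import reals constructive_ereal.
Set Implicit Arguments. Unset Strict Implicit. Unset Printing Implicit Defensive.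
Import Order.TTheory GRing.Theory Num.Theory.
Local Open Scope ring_scope.

(* A BMC over a finite type of types [T]:
   - [off q] : the offspring distribution p(q), given as a finite list of
     (probability, offspring list) pairs (finite support);
   - [c q]   : the cost. *)
Section BMC.
Variables (R : realType) (T : finType).
Variables (off : T -> seq (R * seq T)) (c : T -> R).

Definition is_distr_list (d : seq (R * seq T)) : Prop :=
  (forall pr, pr \in d -> 0 <= pr.1) /\ \sum_(pr <- d) pr.1 = 1.

Definition is_BMC : Prop :=
  (forall q, is_distr_list (off q)) /\ (forall q, 0 < c q).

Definition Fop (x : T -> \bar R) (q : T) : \bar R :=
  ((c q)%:E + \sum_(pr <- off q) (pr.1)%:E * \sum_(t <- pr.2) x t)%E.

(* cs (a real vector, hence finite) is the least fixed point of F in [0,oo]^T *)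
Definition is_lfp_F (cs : T -> R) : Prop :=
  (forall q, 0 <= cs q) /\
  (forall q, Fop (fun t => (cs t)%:E) q = (cs q)%:E) /\
  (forall x : T -> \bar R, (forall q, (0 <= x q)%E) -> (forall q, Fop x q = x q) ->
     forall q, ((cs q)%:E <= x q)%E).

Definition Top (Q : T -> R) (q : T) : R :=
  c q + \sum_(pr <- off q) pr.1 * \sum_(t <- pr.2) Q t.

Variables (lam : nat -> R) (ps : T -> R).

Definition Qupd (i : nat) (Q : T -> R) (q : T) (beta : seq T) : T -> R :=
  fun t => if t == q then (1 - lam i) * Q q + lam i * (c q + \sum_(u <- beta) Q u)
           else Q t.

(* A history is a list of steps (q_j, k_j) where k_j indexes the drawn
   entry of the list [off q_j]. [Qrun i Q h] runs the updates from step i. *)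
Fixpoint Qrun (i : nat) (Q : T -> R) (h : seq (T * nat)) : T -> R :=
  match h with
  | [::] => Q
  | (q, k) :: h' => Qrun i.+1 (Qupd i Q q (nth (0, [::]) (off q) k).2) h'
  end.

(* expectation of f over the first n steps: each step independently selects
   q with probability ps q, then independently draws entry k of off q with
   probability (nth _ (off q) k).1 *)
Fixpoint hexp (n : nat) (f : seq (T * nat) -> R) : R :=
  match n with
  | 0 => f [::]
  | n'.+1 => \sum_(q : T) ps q *
      \sum_(k < size (off q)) (nth (0, [::]) (off q) k).1 *
         hexp n' (fun h => f ((q, nat_of_ord k) :: h))
  end.

Definition EQ (Q0 : T -> R) (i : nat) : T -> R :=
  fun t => hexp i (fun h => Qrun 0 Q0 h t).

End BMC.

From HB Require Import structures.
From mathcomp Require Import all_boot all_order all_algebra.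
From mathcomp Require Import reals constructive_ereal.
From mathcomp Require Import ring lra.
Import Order.TTheory GRing.Theory Num.Theory.
Local Open Scope ring_scope.

(* The proof has a probabilistic half and an order-theoretic half.
   1. The expectation [hexp] over histories is a linear functional that fixes
      constants.  Peeling off the LAST step of a history and averaging over the
      selected type and the drawn offspring gives the exact recursion
        E Q_{i+1}(t) = (1 - a) E Q_i(t) + a T(E Q_i)(t),   a = lam_i * p_t,
      because T is affine and so commutes with expectations ([EQ_rec]).
   2. Abstractly, let F be a monotone operator with a fixed point cs and let
      x_{i+1} = (1 - a_i) x_i + a_i F(x_i) with a_i in [0,1].  If x_0 lies above
      cs and is F-superharmonic (F x_0 <= x_0), both properties propagate, and
      then cs <= F x_i <= x_{i+1} <= x_i ([iterates_sandwich]).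
   The theorem instantiates 2 with F = T, x_i = E Q_i and the initial vector
   x_0 = kappa cs (cs the least fixed point of F, i.e. the expected costs),
   which is superharmonic since T(kappa cs) = c + kappa (cs - c) <= kappa cs. *)

Lemma convex_between (R : realDomainType) (a y z : R) :
  0 <= a <= 1 -> z <= y -> z <= (1 - a) * y + a * z <= y.
Proof. by move=> /andP[a0 a1] zy; apply/andP; split; nra. Qed.

Section MonotoneAveraging.
Variables (R : realDomainType) (T : Type) (F : (T -> R) -> T -> R).
Hypothesis F_mono :
  forall x y : T -> R, (forall t, x t <= y t) -> forall t, F x t <= F y t.
Variables (cs : T -> R) (a : nat -> T -> R) (x : nat -> T -> R).
Hypothesis F_cs : forall t, F cs t = cs t.
Hypothesis a_unit : forall i t, 0 <= a i t <= 1.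
Hypothesis x_rec :
  forall i t, x i.+1 t = (1 - a i t) * x i t + a i t * F (x i) t.
Hypothesis x0_above : forall t, cs t <= x 0 t.
Hypothesis x0_super : forall t, F (x 0) t <= x 0 t.

Lemma step_between i t :
  (forall u, F (x i) u <= x i u) -> F (x i) t <= x i.+1 t <= x i t.
Proof. by move=> super; rewrite x_rec; apply: convex_between. Qed.

Lemma iterates_invariant i :
  (forall t, cs t <= x i t) /\ (forall t, F (x i) t <= x i t).
Proof.
elim: i => [|i [above super]]; first by [].
have le_next u : F (x i) u <= x i.+1 u by case/andP: (step_between i u super).
have le_prev u : x i.+1 u <= x i u by case/andP: (step_between i u super).
split=> t.
- by rewrite -F_cs; apply: le_trans (le_next t); exact: F_mono above t.
- by apply: le_trans (le_next t); exact: F_mono le_prev t.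
Qed.

Lemma iterates_sandwich i t :
  cs t <= F (x i) t /\ F (x i) t <= x i.+1 t /\ x i.+1 t <= x i t.
Proof.
have [above super] := iterates_invariant i.
have /andP[le_next le_prev] := step_between i t super.
by split; first by rewrite -F_cs; exact: F_mono above t.
Qed.

End MonotoneAveraging.

Section Expectation.
Variables (R : realType) (T : finType).
Variables (off : T -> seq (R * seq T)) (ps : T -> R).
Hypothesis off_mass : forall q, \sum_(pr <- off q) pr.1 = 1.
Hypothesis ps_mass : \sum_(q : T) ps q = 1.

Local Notation draw q k := (nth (0, [::]) (off q) k).
Local Notation E n f := (hexp off ps n f).

Lemma sum_draws q (G : R * seq T -> R) :
  \sum_(k < size (off q)) G (draw q k) = \sum_(pr <- off q) G pr.
Proof. by rewrite (big_nth (0, [::])) big_mkord. Qed.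

Lemma hexp_ext n (f g : seq (T * nat) -> R) :
  (forall h, size h = n -> f h = g h) -> E n f = E n g.
Proof.
elim: n f g => [|n IH] f g fg /=; first exact: fg.
apply: eq_bigr => q _; congr (_ * _); apply: eq_bigr => k _; congr (_ * _).
by apply: IH => h hn; apply: fg; rewrite /= hn.
Qed.

Lemma hexpD n (f g : seq (T * nat) -> R) :
  E n (fun h => f h + g h) = E n f + E n g.
Proof.
elim: n f g => [//|n IH] f g /=.
rewrite -big_split /=; apply: eq_bigr => q _.
rewrite -mulrDr -big_split /=; congr (_ * _); apply: eq_bigr => k _.
by rewrite IH mulrDr.
Qed.

Lemma hexpZ n r (f : seq (T * nat) -> R) :
  E n (fun h => r * f h) = r * E n f.
Proof.
elim: n f => [//|n IH] f /=.
rewrite mulr_sumr; apply: eq_bigr => q _.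
rewrite mulrCA; congr (_ * _); rewrite mulr_sumr; apply: eq_bigr => k _.
by rewrite (IH (fun h => f ((q, nat_of_ord k) :: h))) mulrCA.
Qed.

(* The step measure has total mass one, so constants are fixed. *)
Lemma hexp_cst n r : E n (fun _ => r) = r.
Proof.
elim: n => [//|n IH] /=.
under eq_bigr => q _ do
  rewrite IH -mulr_suml (sum_draws q (fun pr => pr.1)) off_mass mul1r.
by rewrite -mulr_suml ps_mass mul1r.
Qed.

Lemma hexp_sum n (I : Type) (s : seq I) (F : I -> seq (T * nat) -> R) :
  E n (fun h => \sum_(j <- s) F j h) = \sum_(j <- s) E n (F j).
Proof.
elim: s => [|j s IH].
  rewrite big_nil -[RHS](hexp_cst n).
  by apply: hexp_ext => h _; rewrite big_nil.
by rewrite big_cons -IH -hexpD; apply: hexp_ext => h _; rewrite big_cons.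
Qed.

Lemma hexp_last n (f : seq (T * nat) -> R) :
  E n.+1 f = E n (fun h => \sum_q ps q *
     \sum_(k < size (off q)) (draw q k).1 * f (rcons h (q, nat_of_ord k))).
Proof.
elim: n f => [//|n IH] f.
have -> : E n.+2 f = \sum_q ps q * \sum_(k < size (off q))
   (draw q k).1 * E n.+1 (fun h => f ((q, nat_of_ord k) :: h)) by [].
by under eq_bigr => q _ do under eq_bigr => k _ do rewrite IH.
Qed.

End Expectation.

Section QLearning.
Variables (R : realType) (T : finType).
Variables (off : T -> seq (R * seq T)) (c : T -> R) (lam : nat -> R) (ps : T -> R).
Hypothesis off_mass : forall q, \sum_(pr <- off q) pr.1 = 1.
Hypothesis ps_mass : \sum_(q : T) ps q = 1.

Local Notation draw q k := (nth (0, [::]) (off q) k).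
Local Notation E n f := (hexp off ps n f).

(* The target operator is affine, hence commutes with expectations. *)
Lemma hexp_Top n (F : seq (T * nat) -> T -> R) t :
  E n (fun h => Top off c (F h) t) = Top off c (fun u => E n (fun h => F h u)) t.
Proof.
rewrite /Top (hexpD _ _ off ps n (fun _ => c t)) hexp_cst //; congr (_ + _).
rewrite hexp_sum //; apply: eq_bigr => pr _.
by rewrite hexpZ hexp_sum.
Qed.

Lemma Qrun_rcons i (Q : T -> R) h q k :
  Qrun off c lam i Q (rcons h (q, k)) =
  Qupd c lam (i + size h) (Qrun off c lam i Q h) q (draw q k).2.
Proof.
elim: h i Q => [|[q' k'] h IH] i Q /=; first by rewrite addn0.
by rewrite IH addSnnS.
Qed.

Lemma Qupd_delta i (Q : T -> R) q beta t :
  Qupd c lam i Q q beta t =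
  Q t + (t == q)%:R * (lam i * (c q + \sum_(u <- beta) Q u - Q q)).
Proof. by rewrite /Qupd; case: eqP => [->|_] /=; ring. Qed.

Lemma draw_average i (Q : T -> R) q t :
  \sum_(k < size (off q)) (draw q k).1 * Qupd c lam i Q q (draw q k).2 t =
  Q t + (t == q)%:R * (lam i * (Top off c Q q - Q q)).
Proof.
under eq_bigr => k _ do rewrite Qupd_delta.
rewrite (sum_draws _ _ _ q (fun pr => pr.1 * (Q t + (t == q)%:R *
  (lam i * (c q + \sum_(u <- pr.2) Q u - Q q))))).
have -> : \sum_(pr <- off q) pr.1 * (Q t + (t == q)%:R *
      (lam i * (c q + \sum_(u <- pr.2) Q u - Q q))) =
    \sum_(pr <- off q) pr.1 * (Q t + (t == q)%:R * (lam i * (c q - Q q))) +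
    (t == q)%:R * lam i * \sum_(pr <- off q) pr.1 * \sum_(u <- pr.2) Q u.
  by rewrite mulr_sumr -big_split; apply: eq_bigr => pr _ /=; ring.
by rewrite -mulr_suml off_mass /Top; ring.
Qed.

Lemma step_average i (Q : T -> R) t :
  \sum_q ps q * \sum_(k < size (off q)) (draw q k).1 *
      Qupd c lam i Q q (draw q k).2 t
  = Q t + lam i * ps t * (Top off c Q t - Q t).
Proof.
under eq_bigr => q _ do rewrite draw_average mulrDr.
rewrite big_split /= -mulr_suml ps_mass mul1r (bigD1 t) //= eqxx big1 => [|q].
  by rewrite addr0 mul1r; ring.
by rewrite eq_sym => /negPf ->; rewrite mul0r mulr0.
Qed.

Lemma EQ_rec Q0 i t :
  EQ off c lam ps Q0 i.+1 t = (1 - lam i * ps t) * EQ off c lam ps Q0 i t +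
      lam i * ps t * Top off c (EQ off c lam ps Q0 i) t.
Proof.
rewrite /EQ hexp_last.
rewrite (hexp_ext _ _ _ _ _ _ ( fun h => (1 - lam i * ps t) * Qrun off c lam 0 Q0 h t +
     lam i * ps t * Top off c (Qrun off c lam 0 Q0 h) t)); last first.
  move=> h hi.
  under eq_bigr => q _ do under eq_bigr => k _ do rewrite Qrun_rcons add0n hi.
  by rewrite step_average; ring.
by rewrite (hexpD _ _ off ps i (fun h => (1 - lam i * ps t) * _)) !hexpZ hexp_Top.
Qed.

End QLearning.

Section TargetOperator.
Variables (R : realType) (T : finType).
Variables (off : T -> seq (R * seq T)) (c : T -> R).

Lemma Top_mono (Q Q' : T -> R) q :
  (forall pr, pr \in off q -> 0 <= pr.1) -> (forall u, Q u <= Q' u) ->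
  Top off c Q q <= Top off c Q' q.
Proof.
move=> pr_ge0 le_QQ'; rewrite /Top lerD2l big_seq [leRHS]big_seq.
apply: ler_sum => pr pr_off; apply: ler_wpM2l; first exact: pr_ge0.
by apply: ler_sum => u _.
Qed.

Lemma TopZ (Q : T -> R) k q :
  Top off c (fun t => k * Q t) q = c q + k * (Top off c Q q - c q).
Proof.
rewrite /Top addrAC subrr add0r mulr_sumr; congr (_ + _); apply: eq_bigr => pr _.
by rewrite -mulr_sumr mulrCA.
Qed.

(* On finite vectors F is T, so a finite fixed point of F is one of T. *)
Lemma Top_lfp (cs : T -> R) q : is_lfp_F off c cs -> Top off c cs q = cs q.
Proof.
move=> [_ [cs_fix _]]; apply: EFin_inj; rewrite -cs_fix /Fop /Top; apply/esym.
under eq_bigr => pr _ do rewrite sumEFin -EFinM.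
by rewrite sumEFin -EFinD.
Qed.

End TargetOperator.

Theorem lemma1 (R : realType) (T : finType)
  (off : T -> seq (R * seq T)) (c : T -> R)
  (lam : nat -> R) (ps : T -> R) (cs : T -> R) (kappa : R) :
  is_BMC off c ->
  is_lfp_F off c cs ->
  (forall i, 0 <= lam i <= 1) ->
  (forall q, 0 <= ps q) -> \sum_(q : T) ps q = 1 ->
  1 <= kappa ->
  forall i : nat, forall q : T,
    let EQi := EQ off c lam ps (fun t => kappa * cs t) i in
    let EQi1 := EQ off c lam ps (fun t => kappa * cs t) i.+1 in
    cs q <= Top off c EQi q /\ Top off c EQi q <= EQi1 q /\ EQi1 q <= EQi q.
Proof.
move=> [off_distr c_gt0] cs_lfp lam_unit ps_ge0 ps_mass kappa_ge1 i q.
have off_mass q' : \sum_(pr <- off q') pr.1 = 1 by case: (off_distr q').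
have cs_fix t : Top off c cs t = cs t by apply: Top_lfp.
have cs_ge0 t : 0 <= cs t by case: cs_lfp => ->.
have ps_le1 t : ps t <= 1.
  by rewrite -ps_mass (bigD1 t) //= lerDl sumr_ge0.
pose x := EQ off c lam ps (fun t => kappa * cs t).
pose a j t := lam j * ps t.
have Top_monotone (Q Q' : T -> R) : (forall u, Q u <= Q' u) ->
    forall t, Top off c Q t <= Top off c Q' t.
  by move=> le_QQ' t; apply: Top_mono le_QQ'; case: (off_distr t).
have a_unit j t : 0 <= a j t <= 1.
  have /andP[l0 l1] := lam_unit j.
  by rewrite /a mulr_ge0 ?mulr_ile1.
have x_rec j t : x j.+1 t = (1 - a j t) * x j t + a j t * Top off c (x j) t.
  exact: EQ_rec.
have x0_above t : cs t <= x 0 t.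
  by rewrite /x /EQ /=; have := cs_ge0 t; nra.
have x0_super t : Top off c (x 0) t <= x 0 t.
  rewrite /x /EQ /= TopZ cs_fix; have := c_gt0 t; have := cs_ge0 t; nra.
exact: (iterates_sandwich _ _ _ Top_monotone cs a x cs_fix a_unit x_rec x0_above x0_super i q).
Qed.
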